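(* Let $\alpha\in\mathbb T$ and $\varepsilon>0$. The set $S=\{n\in\mathbb N:\|n\alpha\|>\varepsilon\}$ is not $2$-large.
   Context: $\|t\|$ is the distance from $t$ to the nearest integer. For $r\ge2$, a set $R\subset\mathbb N$ is $r$-large if for every coloring of $\mathbb N$ with $r$ colors and every length $L$ there is a monochromatic arithmetic progression $a,a+n,\dots,a+(L-1)n$ with $n\in R$. *)

From Stdlib Require Import Reals.
Open Scope R_scope.

Definition dist_nearest_int (t : R) : R :=
  Rmin (frac_part t) (1 - frac_part t).

Definition r_large (r : nat) (Rset : nat -> Prop) : Prop :=
  forall (c : nat -> nat), (forall x, (c x < r)%nat) ->
  forall L : nat, exists a n : nat,
    (1 <= a)%nat /\ Rset n /\
    forall i : nat, (i < L)%nat -> c (a + i * n)%nat = c a.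

Definition S_set (alpha eps : R) (n : nat) : Prop :=
  (1 <= n)%nat /\ dist_nearest_int (INR n * alpha) > eps.

From Stdlib Require Import Reals Lra Lia.
Open Scope R_scope.

(* Colour n by the half of the circle containing n alpha.  If x and x + n get
   the same colour, the fractional part of x alpha moves by exactly the signed
   distance from n alpha to the nearest integer, which exceeds eps in absolute
   value when n is in S.  Along a monochromatic progression of length N + 1
   these displacements add up, so the endpoints lie at distance N * eps apart,
   which is impossible for N * eps > 1/2 since both lie in the same half. *)

Definition half_colour (t : R) : nat :=
  if Rlt_dec (frac_part t) (1/2) then 0%nat else 1%nat.

Definition signed_frac (t : R) : R :=
  if Rlt_dec (frac_part t) (1/2) then frac_part t else frac_part t - 1.

Lemma half_colour_lt2 (t : R) : (half_colour t < 2)%nat.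
Proof. unfold half_colour; destruct (Rlt_dec _ _); lia. Qed.

Lemma Rabs_signed_frac (t : R) : Rabs (signed_frac t) = dist_nearest_int t.
Proof.
  pose proof (base_fp t).
  unfold signed_frac, dist_nearest_int, Rmin.
  destruct (Rlt_dec _ _), (Rle_dec _ _);
    solve [ lra | apply Rabs_right; lra | rewrite Rabs_left; lra ].
Qed.

Lemma frac_part_add_cases (u v : R) :
  frac_part (u + v) = frac_part u + frac_part v \/
  frac_part (u + v) = frac_part u + frac_part v - 1.
Proof.
  destruct (Rlt_dec (frac_part u + frac_part v) 1) as [H|H].
  - left; apply plus_frac_part2; exact H.
  - right; apply plus_frac_part1; lra.
Qed.

Lemma frac_part_close_of_half_colour (s t : R) :
  half_colour s = half_colour t -> Rabs (frac_part s - frac_part t) < 1/2.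
Proof.
  pose proof (base_fp s); pose proof (base_fp t).
  unfold half_colour.
  destruct (Rlt_dec (frac_part s) _), (Rlt_dec (frac_part t) _);
    intros E; try discriminate; apply Rabs_def1; lra.
Qed.

Lemma frac_part_add_of_half_colour (s t : R) :
  half_colour (s + t) = half_colour s ->
  frac_part (s + t) = frac_part s + signed_frac t.
Proof.
  intros E; pose proof (frac_part_close_of_half_colour _ _ E) as Hclose.
  pose proof (base_fp t).
  unfold signed_frac.
  destruct (frac_part_add_cases s t) as [F|F]; rewrite F in Hclose |- *;
    destruct (Rlt_dec (frac_part t) _); apply Rabs_def2 in Hclose; lra.
Qed.

Lemma frac_part_mono_progression (s t : R) (L : nat) :
  (forall i, (i < L)%nat -> half_colour (s + INR i * t) = half_colour s) ->
  forall i, (i < L)%nat ->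
  frac_part (s + INR i * t) = frac_part s + INR i * signed_frac t.
Proof.
  intros Hmono; induction i as [|i IH]; intros Hi.
  - now rewrite !Rmult_0_l, !Rplus_0_r.
  - assert (Hstep : s + INR (S i) * t = (s + INR i * t) + t)
      by (rewrite S_INR; ring).
    assert (Hsame : half_colour ((s + INR i * t) + t)
                    = half_colour (s + INR i * t)).
    { now rewrite <- Hstep, Hmono, (Hmono i) by lia. }
    rewrite Hstep, (frac_part_add_of_half_colour _ _ Hsame), IH, S_INR by lia.
    ring.
Qed.

Lemma mono_progression_dist_lt_half (s t : R) (L : nat) :
  (forall i, (i < L)%nat -> half_colour (s + INR i * t) = half_colour s) ->
  forall i, (i < L)%nat -> INR i * dist_nearest_int t < 1/2.
Proof.
  intros Hmono i Hi.
  pose proof (frac_part_close_of_half_colour _ _ (Hmono i Hi)) as Hclose.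
  rewrite (frac_part_mono_progression _ _ _ Hmono i Hi) in Hclose.
  replace (frac_part s + INR i * signed_frac t - frac_part s)
    with (INR i * signed_frac t) in Hclose by ring.
  rewrite Rabs_mult, Rabs_signed_frac, Rabs_right in Hclose
    by (apply Rle_ge, pos_INR).
  exact Hclose.
Qed.

Theorem mainTheorem17 (alpha eps : R) (Heps : 0 < eps) :
  ~ r_large 2 (S_set alpha eps).
Proof.
  intros Hlarge.
  destruct (INR_archimed eps (1/2) Heps) as [N HN].
  destruct (Hlarge (fun x => half_colour (INR x * alpha))
              (fun x => half_colour_lt2 _) (S N))
    as [a [n [_ [[_ Hdist] Hmono]]]].
  assert (Hprog : forall i, INR (a + i * n) * alpha
                            = INR a * alpha + INR i * (INR n * alpha)).
  { intro i; rewrite plus_INR, mult_INR; ring. }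
  assert (Hmono' : forall i, (i < S N)%nat ->
            half_colour (INR a * alpha + INR i * (INR n * alpha))
            = half_colour (INR a * alpha)).
  { intros i Hi; rewrite <- Hprog; exact (Hmono i Hi). }
  pose proof (mono_progression_dist_lt_half _ _ _ Hmono' N (Nat.lt_succ_diag_r N)).
  assert (INR N * eps <= INR N * dist_nearest_int (INR n * alpha)).
  { apply Rmult_le_compat_l; [apply pos_INR | lra]. }
  lra.
Qed.
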